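(* For finite groups $G$ and $H$, $P_e(G)\cong P_e(H)$ if and only if $C(G)\cong C(H)$ and $|\mathrm{Cyc}(G)|=|\mathrm{Cyc}(H)|$.
   Context: All groups are finite. For a group $X$, the enhanced power graph $P_e(X)$ is the simple graph with vertex set $X$ in which two distinct vertices $x,y$ are adjacent if and only if $\langle x,y\rangle$ is cyclic. Let $\mathrm{Cyc}(X)=\{x\in X : \langle x,y\rangle \text{ is cyclic for all } y\in X\}$. The cyclic graph $C(X)$ is the induced subgraph of $P_e(X)$ on the vertex set $X\setminus \mathrm{Cyc}(X)$. *)

From mathcomp Require Import all_boot all_fingroup all_solvable.
Set Implicit Arguments. Unset Strict Implicit. Unset Printing Implicit Defensive.
Local Open Scope group_scope.

(* Adjacency in the enhanced power graph of a finite group gT (the whole type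
   is the group): distinct x, y with <x, y> cyclic. *)
Definition epg_adj (gT : finGroupType) (x y : gT) : bool :=
  (x != y) && cyclic <<[set x; y]>>.

Definition Cyc (gT : finGroupType) : {set gT} :=
  [set x : gT | [forall y : gT, cyclic <<[set x; y]>>]].

(* Vertex set of the cyclic graph C(X): X \ Cyc(X). *)
Definition noncyc (gT : finGroupType) : {set gT} := ~: Cyc gT.

Definition induced_iso (gT hT : finGroupType) (A : {set gT}) (B : {set hT}) : Prop :=
  exists f : {x : gT | x \in A} -> {y : hT | y \in B},
    bijective f /\
    forall u v, epg_adj (val (f u)) (val (f v)) = epg_adj (val u) (val v).

Definition epg_iso (gT hT : finGroupType) : Prop :=
  exists f : gT -> hT, bijective f /\
    forall x y, epg_adj (f x) (f y) = epg_adj x y.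

Definition cyc_graph_iso (gT hT : finGroupType) : Prop :=
  induced_iso (noncyc gT) (noncyc hT).

From mathcomp Require Import all_boot all_fingroup all_solvable.
Set Implicit Arguments. Unset Strict Implicit. Unset Printing Implicit Defensive.

(* Cyc(X) is exactly the set of universal vertices of P_e(X), i.e. of those
   adjacent to every other vertex.  A graph isomorphism maps universal vertices
   onto universal vertices, so it restricts both to an isomorphism of the cyclic
   graphs and to a bijection between the sets Cyc.  Conversely, the universal
   vertices form a clique joined to every other vertex, so any bijection between
   them, glued with an isomorphism of the remaining induced subgraphs, is an
   isomorphism of the whole graphs. *)

Definition sum_map (A A' B B' : Type) (f : A -> A') (g : B -> B') (s : A + B) : A' + B' :=
  match s with inl a => inl (f a) | inr b => inr (g b) end.

Lemma sum_map_bij (A A' B B' : Type) (f : A -> A') (g : B -> B') :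
  bijective f -> bijective g -> bijective (sum_map f g).
Proof.
move=> [f' fK f'K] [g' gK g'K].
by exists (sum_map f' g') => [[a|b]|[a|b]] /=; rewrite ?fK ?gK ?f'K ?g'K.
Qed.

Lemma eq_card_bij (T U : finType) : #|T| = #|U| -> exists f : T -> U, bijective f.
Proof.
move=> eqTU; exists (enum_val \o cast_ord eqTU \o enum_rank).
apply: bij_comp; last exact: enum_rank_bij.
apply: bij_comp; first exact: enum_val_bij.
by exists (cast_ord (esym eqTU)); [exact: cast_ordK | exact: cast_ordKV].
Qed.

Lemma restrict_bij (T U : finType) (A : {set T}) (B : {set U}) (f : T -> U) :
    bijective f -> (forall x, (f x \in B) = (x \in A)) ->
  exists g : {x | x \in A} -> {y | y \in B},
    bijective g /\ forall u, val (g u) = f (val u).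
Proof.
move=> [f' fK f'K] fB; have f'A y : (f' y \in A) = (y \in B) by rewrite -fB f'K.
exists (fun u => exist _ (f (val u)) (etrans (fB _) (valP u))); split=> //.
exists (fun v => exist _ (f' (val v)) (etrans (f'A _) (valP v))).
  by move=> u; apply: val_inj; rewrite /= fK.
by move=> v; apply: val_inj; rewrite /= f'K.
Qed.

Section SetPartition.

Variables (T : finType) (A : {set T}).

Definition unsplit_set (s : {x | x \in A} + {x | x \in ~: A}) : T :=
  match s with inl u => val u | inr v => val v end.

Lemma unsplit_set_bij : bijective unsplit_set.
Proof.
apply: inj_card_bij; last by rewrite card_sum !card_sig cardsC.
move=> [u|v] [u'|v'] /= eq_uv; try by congr (_ _); apply: val_inj.
  by move: (svalP v'); rewrite inE -eq_uv (svalP u).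
by move: (svalP v); rewrite inE eq_uv (svalP u').
Qed.

End SetPartition.
Arguments unsplit_set {T A}.

Definition rel_iso (T U : finType) (e : rel T) (e' : rel U) : Prop :=
  exists f : T -> U, bijective f /\ forall x y, e' (f x) (f y) = e x y.

Definition induced_rel (T : finType) (e : rel T) (A : {set T}) : rel {x | x \in A} :=
  fun u v => e (val u) (val v).
Arguments induced_rel {T} e A.

Definition universal (T : finType) (e : rel T) : {set T} :=
  [set x | [forall y, (y != x) ==> e x y]].

Lemma universalP (T : finType) (e : rel T) (x : T) :
  reflect (forall y, y != x -> e x y) (x \in universal e).
Proof.
by rewrite inE; apply: (iffP forallP) => x_univ y; [exact/implyP | exact/implyP/x_univ].
Qed.

Section UniversalVertices.

Variables (T : finType) (e : rel T).
Hypotheses (e_sym : symmetric e) (e_irr : irreflexive e).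

Lemma universal_adj x y : x \in universal e -> e x y = (x != y).
Proof.
move=> /universalP x_univ; case: eqVneq => [<-|]; first exact: e_irr.
by rewrite eq_sym => /x_univ.
Qed.

Lemma adj_unsplit (s t : {x | x \in universal e} + {x | x \in ~: universal e}) :
  e (unsplit_set s) (unsplit_set t) =
  match s, t with
  | inl u, inl u' => u != u'
  | inr v, inr v' => e (val v) (val v')
  | _, _ => true
  end.
Proof.
have nonuniv_neq (u : {x | x \in universal e}) (v : {x | x \in ~: universal e}) :
    val u != val v.
  by apply: contraTneq (svalP v) => <-; rewrite inE negbK (svalP u).
case: s t => [u|v] [u'|v'] /=.
- by rewrite universal_adj ?(svalP u) // (inj_eq val_inj).
- by rewrite universal_adj ?(svalP u) ?nonuniv_neq.
- by rewrite e_sym universal_adj ?(svalP u') ?nonuniv_neq.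
- by [].
Qed.

End UniversalVertices.

Lemma iso_universal (T U : finType) (e : rel T) (e' : rel U) (f : T -> U) :
    bijective f -> (forall x y, e' (f x) (f y) = e x y) ->
  forall x, (f x \in universal e') = (x \in universal e).
Proof.
move=> [g fK gK] f_iso x; apply/universalP/universalP => x_univ y y_neq_x.
  by rewrite -f_iso; apply: x_univ; rewrite (can_eq fK).
by rewrite -(gK y) f_iso; apply: x_univ; rewrite -(can_eq fK) gK.
Qed.

Lemma rel_iso_restrict (T U : finType) (e : rel T) (e' : rel U) :
    rel_iso e e' ->
  rel_iso (induced_rel e (~: universal e)) (induced_rel e' (~: universal e')) /\
  #|universal e| = #|universal e'|.
Proof.
move=> [f [fbij f_iso]]; have f_univ := iso_universal fbij f_iso.
have f_nonuniv x : (f x \in ~: universal e') = (x \in ~: universal e).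
  by rewrite !in_setC f_univ.
split.
  have [g [gbij g_val]] := restrict_bij fbij f_nonuniv.
  by exists g; split=> // u v; rewrite /induced_rel !g_val.
have [g [gbij _]] := restrict_bij fbij f_univ.
by have := bij_eq_card gbij; rewrite !card_sig.
Qed.

Lemma rel_iso_glue (T U : finType) (e : rel T) (e' : rel U) :
    symmetric e -> irreflexive e -> symmetric e' -> irreflexive e' ->
    rel_iso (induced_rel e (~: universal e)) (induced_rel e' (~: universal e')) ->
    #|universal e| = #|universal e'| ->
  rel_iso e e'.
Proof.
move=> e_sym e_irr e'_sym e'_irr [F [Fbij F_iso]] eq_univ.
have [h hbij] : exists h : {x | x \in universal e} -> {y | y \in universal e'},
    bijective h.
  by apply: eq_card_bij; rewrite !card_sig eq_univ.
have [split_set unsplitK splitK] := unsplit_set_bij (universal e).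
exists (unsplit_set \o sum_map h F \o split_set); split.
  apply: bij_comp; last by exists unsplit_set.
  by apply: bij_comp; [exact: unsplit_set_bij | exact: sum_map_bij].
move=> x y; rewrite -[x]splitK -[y]splitK /= !unsplitK !adj_unsplit //.
case: (split_set x) (split_set y) => [u|v] [u'|v'] //=.
  by rewrite (inj_eq (bij_inj hbij)).
exact: F_iso.
Qed.

Lemma epg_adj_sym (gT : finGroupType) : symmetric (@epg_adj gT).
Proof. by move=> x y; rewrite /epg_adj eq_sym setUC. Qed.

Lemma epg_adj_irr (gT : finGroupType) : irreflexive (@epg_adj gT).
Proof. by move=> x; rewrite /epg_adj eqxx. Qed.

Lemma Cyc_universal (gT : finGroupType) : Cyc gT = universal (@epg_adj gT).
Proof.
apply/setP => x; rewrite !inE; apply/forallP/forallP => x_cyc y.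
  by apply/implyP => y_neq_x; rewrite /epg_adj eq_sym y_neq_x x_cyc.
case: (eqVneq y x) => [->|y_neq_x]; first by rewrite setUid cycle_cyclic.
by case/andP: (implyP (x_cyc y) y_neq_x).
Qed.

Theorem corollary2 (gT hT : finGroupType) :
  epg_iso gT hT <-> (cyc_graph_iso gT hT /\ #|Cyc gT| = #|Cyc hT|).
Proof.
rewrite /cyc_graph_iso /noncyc !Cyc_universal.
split=> [|[iso_C eq_Cyc]]; first exact: rel_iso_restrict.
exact: rel_iso_glue (@epg_adj_sym gT) (@epg_adj_irr gT)
  (@epg_adj_sym hT) (@epg_adj_irr hT) iso_C eq_Cyc.
Qed.
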